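(* Let $D\in\mathbb{N}$, let $G=(V,E)$ be a finite $D$-Ricci-flat graph, and let $\psi\in C^1((0,\infty))$ be concave with $C_\psi>0$. Then $G$ satisfies the $CD\psi(d,0)$ inequality with $d=D/C_\psi$.
   Context: A finite graph $G=(V,E)$: finite set $V$, irreflexive symmetric relation $E$; $v\sim w$ iff $(v,w)\in E$; $N(v):=\{v\}\cup\{w:w\sim v\}$. $G$ is $D$-Ricci-flat if for every $v\in V$: every $w\in N(v)$ has degree $D$ and there are maps $\eta_1,\dots,\eta_D:N(v)\to V$ with, for all $w\in N(v)$ and $i\neq j$: $\eta_i(w)\sim w$, $\eta_i(w)\neq\eta_j(w)$, and $\bigcup_k\{\eta_k(\eta_i(v))\}=\bigcup_k\{\eta_i(\eta_k(v))\}$. Laplacian $\Delta f(v)=\sum_{w\sim v}(f(w)-f(v))$. For positive $f$: $(\Delta^\psi f)(v):=\Delta\big[\psi\big(\tfrac{f}{f(v)}\big)\big](v)$; $(\Omega^\psi f)(v):=\Delta\Big[\psi'\big(\tfrac{f}{f(v)}\big)\cdot\tfrac{f}{f(v)}\cdot\big(\tfrac{\Delta f}{f}-\tfrac{(\Delta f)(v)}{f(v)}\big)\Big](v)$; $2\Gamma_2^\psi(f):=\Omega^\psi f+\frac{\Delta f\,\Delta^\psi f}{f}-\frac{\Delta(f\,\Delta^\psi f)}{f}$. $CD\psi(d,0)$: $\Gamma_2^\psi(f)\ge\frac1d(\Delta^\psi f)^2$ for all positive $f$. For $x,y>0$, $\widetilde{\psi}(x,y):=[\psi'(x)+\psi'(y)](1-xy)+x[\psi(y)-\psi(1/x)]+y[\psi(x)-\psi(1/y)]$,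 and $C_\psi:=\inf\frac{\widetilde{\psi}(x,y)}{(\psi(x)+\psi(y)-2\psi(1))^2}$, the infimum over all $x,y>0$ with $\psi(x)+\psi(y)\neq2\psi(1)$. *)

From mathcomp Require Import ssreflect ssrfun ssrbool eqtype ssrnat seq fintype bigop.
From Stdlib Require Import Reals.
Set Implicit Arguments. Unset Strict Implicit. Unset Printing Implicit Defensive.
Open Scope R_scope.

Section Defs.
Variable T : finType.
Variable e : rel T.

Definition simple_graph : Prop := irreflexive e /\ symmetric e.

Definition inN (v w : T) : Prop := w = v \/ e w v.

Definition degree (w : T) : nat := #|[pred u | e w u]|.

Definition ricci_flat (D : nat) : Prop :=
  forall v : T,
    (forall w, inN v w -> degree w = D) /\
    exists eta : 'I_D -> T -> T,
      (forall w i, inN v w -> e (eta i w) w) /\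
      (forall w i j, inN v w -> i <> j -> eta i w <> eta j w) /\
      (forall i x, (exists k, x = eta k (eta i v)) <-> (exists k, x = eta i (eta k v))).

Definition lap (g : T -> R) (v : T) : R :=
  \big[Rplus/0]_(w | e v w) (g w - g v).

Definition lap_psi (psi : R -> R) (f : T -> R) (v : T) : R :=
  lap (fun x => psi (f x / f v)) v.

Definition Omega_psi (dpsi : R -> R) (f : T -> R) (v : T) : R :=
  lap (fun x => dpsi (f x / f v) * (f x / f v) * (lap f x / f x - lap f v / f v)) v.

Definition Gamma2_psi_twice (psi dpsi : R -> R) (f : T -> R) (v : T) : R :=
  Omega_psi dpsi f v + lap f v * lap_psi psi f v / f v
  - lap (fun x => f x * lap_psi psi f x) v / f v.

Definition Gamma2_psi (psi dpsi : R -> R) (f : T -> R) (v : T) : R :=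
  Gamma2_psi_twice psi dpsi f v / 2.

Definition CDpsi (psi dpsi : R -> R) (d : R) : Prop :=
  forall f : T -> R, (forall x, 0 < f x) ->
    forall v, Gamma2_psi psi dpsi f v >= / d * (lap_psi psi f v) ^ 2.
End Defs.

Definition psi_tilde (psi dpsi : R -> R) (x y : R) : R :=
  (dpsi x + dpsi y) * (1 - x * y) + x * (psi y - psi (/ x)) + y * (psi x - psi (/ y)).

Definition Cpsi_set (psi dpsi : R -> R) (r : R) : Prop :=
  exists x y, 0 < x /\ 0 < y /\ psi x + psi y <> 2 * psi 1 /\
    r = psi_tilde psi dpsi x y / (psi x + psi y - 2 * psi 1) ^ 2.

Definition is_inf (S : R -> Prop) (c : R) : Prop :=
  (forall r, S r -> c <= r) /\ (forall b, (forall r, S r -> b <= r) -> b <= c).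

Definition C1_pos (psi dpsi : R -> R) : Prop :=
  (forall x, 0 < x -> derivable_pt_lim psi x (dpsi x)) /\
  (forall x, 0 < x -> continuity_pt dpsi x).

Definition concave_pos (psi : R -> R) : Prop :=
  forall x y t, 0 < x -> 0 < y -> 0 <= t <= 1 ->
    t * psi x + (1 - t) * psi y <= psi (t * x + (1 - t) * y).

From HB Require Import structures.
From mathcomp Require Import ssreflect ssrfun ssrbool eqtype ssrnat seq fintype bigop.
From Stdlib Require Import Reals Lra.
Set Implicit Arguments.
Unset Strict Implicit.
Unset Printing Implicit Defensive.
Open Scope R_scope.

(* Fix a vertex v and put y_i = f(eta_i v)/f(v), z_ik = f(eta_k eta_i v)/f(v).
   Ricci-flatness turns 2 Gamma_2^psi(f)(v) into a double sum over i, k, and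
   the commutation {eta_k eta_i v}_k = {eta_i eta_k v}_k lets one symmetrize it
   into sum_{i,k} psi_pair(y_i, y_k, z_ik); each of these terms is nonnegative
   by the tangent-line inequality of the concave psi.  Keeping only the terms
   with eta_k eta_i v = v, where z_ik = 1 and psi_pair reduces to
   psi_tilde(y_i, y_k) >= C_psi (psi(y_i) + psi(y_k) - 2 psi(1))^2, and applying
   Cauchy-Schwarz over the D indices gives 2 Gamma_2^psi >= (2 C_psi / D) (Delta^psi f)^2. *)

HB.instance Definition _ :=
  Monoid.isComLaw.Build R 0 Rplus (fun x y z => esym (Rplus_assoc x y z)) Rplus_comm Rplus_0_l.
HB.instance Definition _ := Monoid.isMulLaw.Build R 0 Rmult Rmult_0_l Rmult_0_r.
HB.instance Definition _ :=
  Monoid.isAddLaw.Build R Rmult Rplus Rmult_plus_distr_r Rmult_plus_distr_l.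

Lemma index_enumE (I : finType) : index_enum I = enum I.
Proof. by rewrite [index_enum _]unlock enumT. Qed.

Lemma uniq_map_index_enum_inj (I : finType) (S : eqType) (f : I -> S) :
  uniq (map f (index_enum I)) -> injective f.
Proof. by rewrite index_enumE => uniq_f; apply/injectiveP. Qed.

Section RealSums.
Variables (I : Type) (r : seq I).

Lemma big_Rplus (F G : I -> R) :
  \big[Rplus/0]_(i <- r) (F i + G i) =
  \big[Rplus/0]_(i <- r) F i + \big[Rplus/0]_(i <- r) G i.
Proof. exact: big_split. Qed.

Lemma big_Rmult_l (c : R) (F : I -> R) :
  c * (\big[Rplus/0]_(i <- r) F i) = \big[Rplus/0]_(i <- r) (c * F i).
Proof. exact: big_distrr. Qed.

Lemma big_Rmult_r (c : R) (F : I -> R) :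
  (\big[Rplus/0]_(i <- r) F i) * c = \big[Rplus/0]_(i <- r) (F i * c).
Proof. exact: big_distrl. Qed.

Lemma big_Ropp (F : I -> R) :
  - (\big[Rplus/0]_(i <- r) F i) = \big[Rplus/0]_(i <- r) - F i.
Proof. by apply: (big_morph Ropp) => [x y|]; ring. Qed.

Lemma big_Rminus (F G : I -> R) :
  \big[Rplus/0]_(i <- r) (F i - G i) =
  \big[Rplus/0]_(i <- r) F i - \big[Rplus/0]_(i <- r) G i.
Proof. by rewrite /Rminus big_Rplus big_Ropp. Qed.

Lemma big_Rdiv (F : I -> R) (c : R) :
  (\big[Rplus/0]_(i <- r) F i) / c = \big[Rplus/0]_(i <- r) (F i / c).
Proof. exact: big_Rmult_r. Qed.

Lemma big_Rle (F G : I -> R) :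
  (forall i, F i <= G i) -> \big[Rplus/0]_(i <- r) F i <= \big[Rplus/0]_(i <- r) G i.
Proof. by move=> FG; apply: (big_ind2 Rle) => // *; lra. Qed.

Lemma big_Rge0 (P : pred I) (F : I -> R) :
  (forall i, 0 <= F i) -> 0 <= \big[Rplus/0]_(i <- r | P i) F i.
Proof. by move=> F0; apply: (big_ind (Rle 0)) => // *; lra. Qed.

End RealSums.

Lemma big_Rconst n (c : R) : \big[Rplus/0]_(i < n) c = INR n * c.
Proof.
rewrite big_const_ord; elim: n => [|n IH]; first by rewrite /=; ring.
by rewrite [iter _ _ _]/= IH S_INR; ring.
Qed.

Lemma big_Rle_term (I : finType) (F : I -> R) (j : I) :
  (forall i, 0 <= F i) -> F j <= \big[Rplus/0]_i F i.
Proof.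
move=> F0; rewrite (bigD1 j) //=.
have := big_Rge0 (index_enum I) (fun i => i != j) F0; lra.
Qed.

Lemma big2_Rplus_shift n (F : 'I_n -> 'I_n -> R) (G : 'I_n -> R) :
  \big[Rplus/0]_(i < n) \big[Rplus/0]_(k < n) (F i k + (G k - G i)) =
  \big[Rplus/0]_(i < n) \big[Rplus/0]_(k < n) F i k.
Proof.
have shift0 : \big[Rplus/0]_(i < n) \big[Rplus/0]_(k < n) (G k - G i) = 0.
  under eq_bigr => i _ do rewrite big_Rminus.
  by rewrite big_Rminus exchange_big Rminus_diag.
under eq_bigr => i _ do rewrite big_Rplus.
by rewrite big_Rplus shift0 Rplus_0_r.
Qed.

Lemma big_Rsqr_le n (u : 'I_n -> R) :
  (\big[Rplus/0]_(i < n) u i) ^ 2 <= INR n * \big[Rplus/0]_(i < n) u i ^ 2.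
Proof.
case: n u => [|n] u; first by rewrite !big_ord0 /=; lra.
set S := \big[Rplus/0]_(i < n.+1) u i.
have n_pos : 0 < INR n.+1 by apply: lt_0_INR; apply/ltP.
set m := S / INR n.+1.
have var_ge0 : 0 <= \big[Rplus/0]_(i < n.+1) u i ^ 2 - 2 * m * S + INR n.+1 * (m * m).
  rewrite -big_Rconst big_Rmult_l -big_Rminus -big_Rplus.
  by apply: big_Rge0 => i; have := pow2_ge_0 (u i - m); lra.
have S_eq : S = INR n.+1 * m by rewrite /m; field; lra.
rewrite S_eq in var_ge0 *.
have := Rmult_le_compat_l _ _ _ (Rlt_le _ _ n_pos) var_ge0.
lra.
Qed.

Lemma derivable_pt_lim_ge_secant (g : R -> R) (l c : R) :
  derivable_pt_lim g 0 l -> (forall t, 0 < t <= 1 -> t * c <= g t - g 0) -> c <= l.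
Proof.
move=> dg secant; apply: Rnot_lt_le => lt_lc.
have [delta close] := dg (c - l) ltac:(lra).
have delta_pos := cond_pos delta.
set t := Rmin 1 (delta / 2).
have t_pos : 0 < t by apply: Rmin_pos; lra.
have t_le1 : t <= 1 := Rmin_l _ _.
have t_le_half : t <= delta / 2 := Rmin_r _ _.
have t_small : Rabs t < delta by rewrite Rabs_pos_eq; lra.
have := close t ltac:(lra) t_small; rewrite Rplus_0_l => /Rabs_def2 [quot_lt _].
have : c <= (g t - g 0) / t.
  by apply: (Rmult_le_reg_r t) => //; rewrite /Rdiv Rmult_assoc Rinv_l; [have := secant t; lra | lra].
lra.
Qed.

Lemma concave_tangent_le (psi dpsi : R -> R) :
  (forall x, 0 < x -> derivable_pt_lim psi x (dpsi x)) -> concave_pos psi ->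
  forall a x, 0 < a -> 0 < x -> psi x <= psi a + dpsi a * (x - a).
Proof.
move=> dpsiP conc a x a_pos x_pos.
pose line t := a + t * (x - a).
have dline : derivable_pt_lim line 0 (x - a).
  have := derivable_pt_lim_plus _ _ 0 _ _ (derivable_pt_lim_const a 0)
    (derivable_pt_lim_scal_right _ _ _ (x - a) (derivable_pt_lim_id 0)).
  by rewrite Rplus_0_l Rmult_1_l.
have dpsi_a : derivable_pt_lim psi (line 0) (dpsi a).
  by rewrite /line Rmult_0_l Rplus_0_r; exact: dpsiP.
suff : psi x - psi a <= dpsi a * (x - a) by lra.
apply: (derivable_pt_lim_ge_secant (derivable_pt_lim_comp _ _ _ _ _ dline dpsi_a)).
move=> t t01; rewrite /comp /line Rmult_0_l Rplus_0_r.
have := conc x a t x_pos a_pos ltac:(lra).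
by rewrite (_ : t * x + (1 - t) * a = a + t * (x - a)); [lra | ring].
Qed.

Definition psi_pair (psi dpsi : R -> R) (a b w : R) : R :=
  (dpsi a + dpsi b) * (w - a * b) - a * psi (w / a) - b * psi (w / b)
  + b * psi a + a * psi b.

Section TangentLines.
Variables psi dpsi : R -> R.
Hypothesis tangent :
  forall a x, 0 < a -> 0 < x -> psi x <= psi a + dpsi a * (x - a).

Lemma psi_pair_ge0 a b w : 0 < a -> 0 < b -> 0 < w -> 0 <= psi_pair psi dpsi a b w.
Proof.
move=> a_pos b_pos w_pos.
have at_a := Rmult_le_compat_l b _ _ (Rlt_le _ _ b_pos)
  (@tangent a (w / b) a_pos ltac:(apply: Rdiv_lt_0_compat; lra)).
have at_b := Rmult_le_compat_l a _ _ (Rlt_le _ _ a_pos)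
  (@tangent b (w / a) b_pos ltac:(apply: Rdiv_lt_0_compat; lra)).
rewrite (_ : b * (psi a + dpsi a * (w / b - a)) = b * psi a + dpsi a * (w - a * b))
  in at_a; last by field; lra.
rewrite (_ : a * (psi b + dpsi b * (w / a - b)) = a * psi b + dpsi b * (w - a * b))
  in at_b; last by field; lra.
rewrite /psi_pair; lra.
Qed.

Lemma psi_tilde_psi_pair x y : psi_tilde psi dpsi x y = psi_pair psi dpsi x y 1.
Proof. by rewrite /psi_tilde /psi_pair /Rdiv !Rmult_1_l; ring. Qed.

Lemma Cpsi_bound C x y : is_inf (Cpsi_set psi dpsi) C -> 0 < x -> 0 < y ->
  C * (psi x + psi y - 2 * psi 1) ^ 2 <= psi_pair psi dpsi x y 1.
Proof.
move=> [C_lb _] x_pos y_pos.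
have [balanced | unbalanced] := Req_dec (psi x + psi y) (2 * psi 1).
  have -> : psi x + psi y - 2 * psi 1 = 0 by lra.
  by rewrite /= Rmult_0_l Rmult_0_r; apply: psi_pair_ge0; lra.
have sq_pos : 0 < (psi x + psi y - 2 * psi 1) ^ 2.
  by rewrite -Rsqr_pow2; apply: Rsqr_pos_lt; lra.
have := C_lb _ (ex_intro _ x (ex_intro _ y (conj x_pos (conj y_pos (conj unbalanced erefl))))).
rewrite psi_tilde_psi_pair => le_ratio.
have := Rmult_le_compat_r _ _ _ (Rlt_le _ _ sq_pos) le_ratio.
by rewrite /Rdiv Rmult_assoc Rinv_l ?Rmult_1_r //; lra.
Qed.

End TangentLines.

Definition gamma_term (psi dpsi : R -> R) {D : nat}
    (y : 'I_D -> R) (z : 'I_D -> 'I_D -> R) (i k : 'I_D) : R :=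
  dpsi (y i) * (z i k - y i * y k) - y i * (psi (z i k / y i) - psi 1)
  + y k * (psi (y i) - psi 1).

Section DoubleSum.
Variables (psi dpsi : R -> R) (D : nat) (y : 'I_D -> R) (z : 'I_D -> 'I_D -> R).
Hypothesis z_comm :
  forall k (g : R -> R), \big[Rplus/0]_(i < D) g (z i k) = \big[Rplus/0]_(i < D) g (z k i).

Lemma gamma_sum_symmetrize :
  2 * \big[Rplus/0]_(i < D) \big[Rplus/0]_(k < D) gamma_term psi dpsi y z i k =
  \big[Rplus/0]_(i < D) \big[Rplus/0]_(k < D) psi_pair psi dpsi (y i) (y k) (z i k).
Proof.
pose G i w := dpsi (y i) * w - y i * psi (w / y i).
pose rest i k := - (dpsi (y i) * y i * y k) + y i * psi 1 + y k * (psi (y i) - psi 1).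
have split_sum : \big[Rplus/0]_(i < D) \big[Rplus/0]_(k < D) gamma_term psi dpsi y z i k =
    \big[Rplus/0]_(i < D) \big[Rplus/0]_(k < D) G i (z i k) +
    \big[Rplus/0]_(i < D) \big[Rplus/0]_(k < D) rest i k.
  rewrite -big_Rplus; apply: eq_bigr => i _; rewrite -big_Rplus.
  by apply: eq_bigr => k _; rewrite /gamma_term /G /rest; ring.
have swapG : \big[Rplus/0]_(i < D) \big[Rplus/0]_(k < D) G i (z i k) =
    \big[Rplus/0]_(i < D) \big[Rplus/0]_(k < D) G k (z i k).
  by rewrite [RHS]exchange_big; apply: eq_bigr => i _; rewrite z_comm.
have swapR : \big[Rplus/0]_(i < D) \big[Rplus/0]_(k < D) rest i k =
    \big[Rplus/0]_(i < D) \big[Rplus/0]_(k < D) rest k i.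
  exact: exchange_big.
rewrite -Rplus_diag.
rewrite split_sum {2}swapG {2}swapR -!big_Rplus; apply: eq_bigr => i _.
rewrite -!big_Rplus; apply: eq_bigr => k _.
by rewrite /G /rest /psi_pair; ring.
Qed.

Hypotheses (y_pos : forall i, 0 < y i) (z_pos : forall i k, 0 < z i k).
Hypothesis tangent :
  forall a x, 0 < a -> 0 < x -> psi x <= psi a + dpsi a * (x - a).

Lemma gamma_sum_ge0 :
  0 <= \big[Rplus/0]_(i < D) \big[Rplus/0]_(k < D) gamma_term psi dpsi y z i k.
Proof.
suff : 0 <= 2 * \big[Rplus/0]_(i < D) \big[Rplus/0]_(k < D) gamma_term psi dpsi y z i k
  by lra.
rewrite gamma_sum_symmetrize.
by apply: big_Rge0 => i; apply: big_Rge0 => k; apply: psi_pair_ge0.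
Qed.

Variables (C : R) (k0 : 'I_D -> 'I_D).
Hypothesis C_ge0 : 0 <= C.
Hypothesis C_bound : forall a b, 0 < a -> 0 < b ->
  C * (psi a + psi b - 2 * psi 1) ^ 2 <= psi_pair psi dpsi a b 1.
Hypotheses (k0_inj : injective k0) (z_k0 : forall i, z i (k0 i) = 1).

Lemma gamma_sum_lower_bound :
  2 * C * (\big[Rplus/0]_(i < D) (psi (y i) - psi 1)) ^ 2 <=
  INR D * \big[Rplus/0]_(i < D) \big[Rplus/0]_(k < D) gamma_term psi dpsi y z i k.
Proof.
set S := \big[Rplus/0]_(i < D) \big[Rplus/0]_(k < D) _.
pose P i := psi (y i) - psi 1.
have pair_bound : C * \big[Rplus/0]_(i < D) (P i + P (k0 i)) ^ 2 <= 2 * S.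
  rewrite gamma_sum_symmetrize big_Rmult_l; apply: big_Rle => i.
  apply: Rle_trans (big_Rle_term (k0 i) _); last first.
    by move=> k; apply: psi_pair_ge0.
  rewrite z_k0 (_ : P i + P (k0 i) = psi (y i) + psi (y (k0 i)) - 2 * psi 1).
    exact: C_bound.
  by rewrite /P; ring.
have sum_k0 : \big[Rplus/0]_(i < D) (P i + P (k0 i)) = 2 * \big[Rplus/0]_(i < D) P i.
  have reindex : \big[Rplus/0]_(i < D) P (k0 i) = \big[Rplus/0]_(i < D) P i.
    by symmetry; exact: reindex_inj.
  by rewrite big_Rplus reindex Rplus_diag.
have := big_Rsqr_le (fun i => P i + P (k0 i)); rewrite sum_k0 => cauchy.
have C_cauchy := Rmult_le_compat_l _ _ _ C_ge0 cauchy.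
have D_pair := Rmult_le_compat_l _ _ _ (pos_INR D) pair_bound.
change (2 * C * (\big[Rplus/0]_(i < D) P i) ^ 2 <= INR D * S); lra.
Qed.
End DoubleSum.

Section Neighbours.
Variables (T : finType) (e : rel T) (D : nat) (w : T) (h : 'I_D -> T).
Hypotheses (e_sym : symmetric e) (deg_w : degree e w = D).
Hypotheses (h_nbr : forall i, e (h i) w) (h_inj : injective h).

Lemma perm_nbr : perm_eq (map h (index_enum 'I_D)) (enum [pred u | e w u]).
Proof.
have uniq_h : uniq (map h (index_enum 'I_D)) by rewrite map_inj_uniq ?index_enum_uniq.
have sub_nbr : {subset map h (index_enum 'I_D) <= enum [pred u | e w u]}.
  by move=> _ /mapP [i _ ->]; rewrite mem_enum inE e_sym.
have size_nbr : leq (size (enum [pred u | e w u])) (size (map h (index_enum 'I_D))).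
  by rewrite size_map index_enumE size_enum_ord -deg_w -cardE.
have [_ same] := uniq_min_size uniq_h sub_nbr size_nbr.
exact: uniq_perm (enum_uniq _) same.
Qed.

Lemma big_nbr (F : T -> R) :
  \big[Rplus/0]_(u | e w u) F u = \big[Rplus/0]_(i < D) F (h i).
Proof.
transitivity (\big[Rplus/0]_(u <- map h (index_enum 'I_D)) F u); last by rewrite big_map.
rewrite (perm_big _ perm_nbr) big_enum.
by apply: eq_bigl => u; rewrite inE.
Qed.

Lemma nbr_surj u : e w u -> exists i, u = h i.
Proof.
move=> wu; have : u \in map h (index_enum 'I_D) by rewrite (perm_mem perm_nbr) mem_enum.
by case/mapP=> i _ ->; exists i.
Qed.

End Neighbours.

Section RicciFlatStar.
Variables (T : finType) (e : rel T) (D : nat) (eta : 'I_D -> T -> T) (v : T).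
Hypothesis e_sym : symmetric e.
Hypothesis deg_star : forall w, inN e v w -> degree e w = D.
Hypothesis eta_nbr : forall w i, inN e v w -> e (eta i w) w.
Hypothesis eta_dist : forall w i j, inN e v w -> i <> j -> eta i w <> eta j w.
Hypothesis eta_comm : forall i x,
  (exists k, x = eta k (eta i v)) <-> (exists k, x = eta i (eta k v)).

Lemma eta_in_star i : inN e v (eta i v).
Proof. by right; apply: eta_nbr; left. Qed.

Lemma eta_inj w : inN e v w -> injective (eta^~ w).
Proof.
move=> vw i j eq_ij; case: (eqVneq i j) => [// | /eqP neq_ij].
by case: (eta_dist vw neq_ij eq_ij).
Qed.

Lemma lap_star w g : inN e v w ->
  lap e g w = \big[Rplus/0]_(i < D) (g (eta i w) - g w).
Proof.
move=> vw; exact: (big_nbr e_sym (deg_star vw) (fun i => eta_nbr i vw) (eta_inj vw)).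
Qed.

Lemma uniq_eta_eta k : uniq (map (fun i => eta i (eta k v)) (index_enum 'I_D)).
Proof. by rewrite map_inj_uniq ?index_enum_uniq //; apply/eta_inj/eta_in_star. Qed.

Lemma perm_eta_comm k :
  perm_eq (map (fun i => eta k (eta i v)) (index_enum 'I_D))
          (map (fun i => eta i (eta k v)) (index_enum 'I_D)).
Proof.
have same : map (fun i => eta k (eta i v)) (index_enum 'I_D) =i
            map (fun i => eta i (eta k v)) (index_enum 'I_D).
  move=> x; apply/mapP/mapP => -[j _ ->].
  - have [l ->] := (eta_comm k (eta k (eta j v))).2 (ex_intro _ j erefl).
    by exists l; rewrite ?mem_index_enum.
  - have [l ->] := (eta_comm k (eta j (eta k v))).1 (ex_intro _ j erefl).
    by exists l; rewrite ?mem_index_enum.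
have uniq_l : uniq (map (fun i => eta k (eta i v)) (index_enum 'I_D)).
  by apply: (leq_size_uniq (uniq_eta_eta k)) => [x | ]; rewrite ?same // !size_map.
exact: uniq_perm uniq_l (uniq_eta_eta k) same.
Qed.

Lemma big_eta_comm k (g : T -> R) :
  \big[Rplus/0]_(i < D) g (eta k (eta i v)) = \big[Rplus/0]_(i < D) g (eta i (eta k v)).
Proof.
rewrite -(big_map (fun i => eta k (eta i v)) xpredT) -(big_map (fun i => eta i (eta k v)) xpredT).
exact: perm_big (perm_eta_comm k).
Qed.

Lemma eta_comm_inj k : injective (fun i => eta k (eta i v)).
Proof.
by apply: uniq_map_index_enum_inj; rewrite (perm_uniq (perm_eta_comm k)) uniq_eta_eta.
Qed.

Lemma exists_return_index :
  exists k0 : 'I_D -> 'I_D, injective k0 /\ forall i, eta (k0 i) (eta i v) = v.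
Proof.
pose k0 i := odflt i [pick k | eta k (eta i v) == v].
have k0_ret i : eta (k0 i) (eta i v) = v.
  rewrite /k0; case: pickP => [k /eqP // | none].
  have [k ret_k] := nbr_surj e_sym (deg_star (eta_in_star i)) (fun k => eta_nbr k (eta_in_star i))
    (eta_inj (eta_in_star i)) (eta_nbr i (or_introl erefl)).
  by move: (none k); rewrite -ret_k eqxx.
exists k0; split => // i j eq_k0.
by apply: (@eta_comm_inj (k0 i)); rewrite /= k0_ret eq_k0 k0_ret.
Qed.

End RicciFlatStar.

Section LocalFormulas.
Variables (T : finType) (e : rel T) (D : nat) (eta : 'I_D -> T -> T) (v : T).
Variables (f : T -> R) (psi dpsi : R -> R).
Hypothesis f_pos : forall x, 0 < f x.
Hypothesis lap_v : forall g, lap e g v = \big[Rplus/0]_(i < D) (g (eta i v) - g v).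
Hypothesis lap_eta : forall i g,
  lap e g (eta i v) = \big[Rplus/0]_(k < D) (g (eta k (eta i v)) - g (eta i v)).

Definition nbr_ratio i := f (eta i v) / f v.
Definition nbr2_ratio i k := f (eta k (eta i v)) / f v.

Let f_neq0 x : f x <> 0. Proof. exact: Rgt_not_eq (f_pos x). Qed.

Lemma lap_psi_star :
  lap_psi e psi f v = \big[Rplus/0]_(i < D) (psi (nbr_ratio i) - psi 1).
Proof. by rewrite /lap_psi lap_v Rdiv_diag. Qed.

Lemma Omega_psi_star :
  Omega_psi e dpsi f v = \big[Rplus/0]_(i < D) \big[Rplus/0]_(k < D)
    (dpsi (nbr_ratio i) * (nbr2_ratio i k - nbr_ratio i * nbr_ratio k)).
Proof.
rewrite /Omega_psi lap_v; apply: eq_bigr => i _.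
rewrite Rminus_diag Rmult_0_r Rminus_0_r lap_eta lap_v !big_Rdiv -big_Rminus big_Rmult_l.
apply: eq_bigr => k _; rewrite /nbr_ratio /nbr2_ratio.
by field; split; apply: f_neq0.
Qed.

Lemma lap_lap_psi_star :
  lap e f v * lap_psi e psi f v / f v = \big[Rplus/0]_(i < D) \big[Rplus/0]_(k < D)
    ((nbr_ratio k - 1) * (psi (nbr_ratio i) - psi 1)).
Proof.
rewrite lap_psi_star lap_v Rmult_comm /Rdiv Rmult_assoc big_Rmult_r.
apply: eq_bigr => i _; rewrite Rmult_comm big_Rmult_r big_Rmult_r.
apply: eq_bigr => k _; rewrite /nbr_ratio.
by field; apply: f_neq0.
Qed.

Lemma lap_f_lap_psi_star :
  lap e (fun x => f x * lap_psi e psi f x) v / f v =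
  \big[Rplus/0]_(i < D) \big[Rplus/0]_(k < D)
    (nbr_ratio i * (psi (nbr2_ratio i k / nbr_ratio i) - psi 1) - (psi (nbr_ratio k) - psi 1)).
Proof.
rewrite lap_v big_Rdiv; apply: eq_bigr => i _.
rewrite /lap_psi lap_eta lap_v !big_Rmult_l -big_Rminus big_Rdiv.
apply: eq_bigr => k _; rewrite /nbr_ratio /nbr2_ratio !Rdiv_diag //.
rewrite (_ : f (eta k (eta i v)) / f v / (f (eta i v) / f v) =
             f (eta k (eta i v)) / f (eta i v)); last by field; split; apply: f_neq0.
by field; apply: f_neq0.
Qed.

Lemma Gamma2_psi_twice_star :
  Gamma2_psi_twice e psi dpsi f v = \big[Rplus/0]_(i < D) \big[Rplus/0]_(k < D)
    gamma_term psi dpsi nbr_ratio nbr2_ratio i k.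
Proof.
rewrite /Gamma2_psi_twice Omega_psi_star lap_lap_psi_star lap_f_lap_psi_star.
rewrite -[RHS](big2_Rplus_shift _ (fun i => psi (nbr_ratio i) - psi 1)).
rewrite -big_Rplus -big_Rminus; apply: eq_bigr => i _.
rewrite -big_Rplus -big_Rminus; apply: eq_bigr => k _.
by rewrite /gamma_term; ring.
Qed.

End LocalFormulas.

(* For n = 0 this relies on [/ 0 = 0] in Stdlib's reals. *)
Lemma half_ge_scaled_sq (n C S Q : R) : 0 < C -> 0 <= n -> 0 <= S ->
  2 * C * Q ^ 2 <= n * S -> S / 2 >= / (n / C) * Q ^ 2.
Proof.
move=> C_pos n_ge0 S_ge0 bound; case: (Rle_lt_or_eq_dec 0 n n_ge0) => [n_pos | <-].
  rewrite (_ : / (n / C) = C / n); last by field; lra.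
  apply: Rle_ge; apply: (Rmult_le_reg_l (2 * n)); first lra.
  by rewrite (_ : 2 * n * (C / n * Q ^ 2) = 2 * C * Q ^ 2); [lra | field; lra].
by rewrite /Rdiv Rmult_0_l Rinv_0 Rmult_0_l; lra.
Qed.

Theorem mainTheorem13 (D : nat) (T : finType) (e : rel T)
  (psi dpsi : R -> R) (C : R) :
  simple_graph e -> ricci_flat e D ->
  C1_pos psi dpsi -> concave_pos psi ->
  is_inf (Cpsi_set psi dpsi) C -> 0 < C ->
  CDpsi e psi dpsi (INR D / C).
Proof.
move=> [_ e_sym] ricci [dpsiP _] conc C_inf C_pos f f_pos v.
have [deg [eta [eta_nbr [eta_dist eta_comm]]]] := ricci v.
have tangent := concave_tangent_le dpsiP conc.
have lap_v := fun g => lap_star e_sym deg eta_nbr eta_dist g (or_introl erefl).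
have lap_eta := fun i g => lap_star e_sym deg eta_nbr eta_dist g (eta_in_star eta_nbr i).
have [k0 [k0_inj k0_ret]] := exists_return_index e_sym deg eta_nbr eta_dist eta_comm.
have y_pos i : 0 < nbr_ratio eta v f i by apply: Rdiv_lt_0_compat.
have z_pos i k : 0 < nbr2_ratio eta v f i k by apply: Rdiv_lt_0_compat.
have z_comm k (g : R -> R) : \big[Rplus/0]_(i < D) g (nbr2_ratio eta v f i k) =
                             \big[Rplus/0]_(i < D) g (nbr2_ratio eta v f k i).
  exact: (big_eta_comm eta_nbr eta_dist eta_comm k (fun u => g (f u / f v))).
have z_k0 i : nbr2_ratio eta v f i (k0 i) = 1.
  by rewrite /nbr2_ratio k0_ret Rdiv_diag //; apply: Rgt_not_eq.
rewrite /Gamma2_psi (Gamma2_psi_twice_star psi dpsi f_pos lap_v lap_eta) (lap_psi_star psi f_pos lap_v).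
apply: half_ge_scaled_sq => //; first exact: pos_INR.
  exact: gamma_sum_ge0 z_comm y_pos z_pos tangent.
apply: (gamma_sum_lower_bound z_comm y_pos z_pos tangent (Rlt_le _ _ C_pos) _ k0_inj z_k0).
by move=> a b a_pos b_pos; apply: Cpsi_bound.
Qed.
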